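(* Let $r \geq 1$ be an integer. Call an $m \times n$ matrix $A$ with entries in $\{0,1\}$ a ''good'' group testing matrix if (1) for every $0$-$1$ vector $x \in \{0,1\}^n$ with at most $k=1$ nonzero entry, $x$ is uniquely determined by the Boolean test outcome vector $y \in \{0,1\}^m$ defined by $y_i = \max_{1 \le j \le n} A_{i,j} x_j$ (i.e. $y_i = 1$ if and only if some positive element $j$ has $A_{i,j}=1$), and (2) every row of $A$ contains at most $r$ entries equal to $1$. Then there exists a good group testing matrix with $m = r$ and $n = \frac{r(r+1)}{2}$, so that $\frac{n}{m} = \frac{r+1}{2}$. Moreover, there is no good group testing matrix of any dimension $m \times n$ with $\frac{n}{m} > \frac{r+1}{2}$.
   Context: Non-adaptive group testing: there are $n$ subjects and $m$ pooled tests, encoded by a $0$-$1$ pooling matrix $A$ with $A_{i,j}=1$ iff subject $j$'s sample is included in test $i$. A test is positive iff it contains at least one positive subject. ''Correctly infer the status of each of the $n$ elements whenever there is at most one positive element'' means the map from the set of status vectors with at most one positive entry to test outcome vectors is injective. The row constraint (at most $r$ ones per row) models the dilution constraint that at most $r$ samples can be pooled together. *)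

From mathcomp Require Import all_boot all_order all_algebra.
Set Implicit Arguments. Unset Strict Implicit. Unset Printing Implicit Defensive.

Definition weight n (x : {ffun 'I_n -> bool}) : nat := #|[set j | x j]|.

Definition outcome m n (A : 'M[bool]_(m, n)) (x : {ffun 'I_n -> bool})
  : {ffun 'I_m -> bool} := [ffun i => [exists j, A i j && x j]].

Definition identifies_one m n (A : 'M[bool]_(m, n)) : Prop :=
  forall x x' : {ffun 'I_n -> bool},
    weight x <= 1 -> weight x' <= 1 -> outcome A x = outcome A x' -> x = x'.

Definition row_bounded r m n (A : 'M[bool]_(m, n)) : Prop :=
  forall i : 'I_m, #|[set j | A i j]| <= r.

Definition good r m n (A : 'M[bool]_(m, n)) : Prop :=
  identifies_one A /\ row_bounded r A.

From mathcomp Require Import all_boot all_order all_algebra.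
From mathcomp Require Import zify.

(** A matrix identifies one positive exactly when its columns are nonempty
    (so that no single positive looks like no positive at all) and pairwise
    distinct.  Counting the ones column by column, every column contributes at
    least two to [#ones + #(columns with a single one)]; by double counting the
    first term is at most [r m], and distinct single-one columns are at most
    [m], whence [2 n <= (r + 1) m].  Equality is attained by the incidence
    matrix of the 1- and 2-element subsets of [{0, ..., r-1}]: it has
    [r + 'C(r, 2) = r (r + 1) / 2] columns, and row [i] meets only the [r] sets
    [{i}] and [{i, k}], [k <> i]. *)

Set Implicit Arguments.
Unset Strict Implicit.
Unset Printing Implicit Defensive.

Section StatusVectors.

Variable n : nat.

Definition status (S : {set 'I_n}) : {ffun 'I_n -> bool} := [ffun j => j \in S].

Lemma support_status S : [set j | status S j] = S.
Proof. by apply/setP => j; rewrite inE ffunE. Qed.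

Lemma status_inj : injective status.
Proof. by move=> S S' eSS'; rewrite -(support_status S) -(support_status S') eSS'. Qed.

Lemma status_support (x : {ffun 'I_n -> bool}) : status [set j | x j] = x.
Proof. by apply/ffunP => j; rewrite ffunE inE. Qed.

Lemma weight_status S : weight (status S) = #|S|.
Proof. by rewrite /weight support_status. Qed.

End StatusVectors.

Lemma card_le1_cases (T : finType) (S : {set T}) :
  #|S| <= 1 -> S = set0 \/ exists x, S = [set x].
Proof.
rewrite leq_eqVlt ltnS leqn0 => /orP[/cards1P | /eqP/cards0_eq]; by [right | left].
Qed.

Definition col_support m n (A : 'M[bool]_(m, n)) (j : 'I_n) : {set 'I_m} :=
  [set i | A i j].

Section Outcomes.

Variables m n : nat.
Variable A : 'M[bool]_(m, n).

Lemma outcome_status0 i : outcome A (status set0) i = false.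
Proof. by rewrite ffunE; apply/existsP => -[j]; rewrite ffunE in_set0 andbF. Qed.

Lemma outcome_status1 j i : outcome A (status [set j]) i = A i j.
Proof.
rewrite ffunE; apply/existsP/idP => [[k] | Aij]; last by exists j; rewrite ffunE set11 Aij.
by rewrite ffunE in_set1 => /andP[Aik /eqP <-].
Qed.

Lemma identifies_oneP :
  identifies_one A <-> injective (col_support A) /\ forall j, col_support A j != set0.
Proof.
split=> [idA | [injA nzA] x x' wx wx' eAxx'].
  have idA1 (S S' : {set 'I_n}) : #|S| <= 1 -> #|S'| <= 1 ->
      outcome A (status S) = outcome A (status S') -> S = S'.
    by move=> *; apply/status_inj/idA; rewrite ?weight_status.
  split=> [j j' ejj' | j].
    apply/set1_inj/idA1; rewrite ?cards1 //; apply/ffunP => i.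
    by have /setP/(_ i) := ejj'; rewrite !outcome_status1 !inE.
  apply/negP => /eqP colA0; suff: [set j] = set0 by move/setP/(_ j); rewrite set11 in_set0.
  apply: idA1; rewrite ?cards1 ?cards0 //; apply/ffunP => i.
  by have /setP/(_ i) := colA0; rewrite outcome_status1 outcome_status0 !inE.
have outcome_neq0 j : outcome A (status [set j]) <> outcome A (status set0).
  have [i] := set0Pn _ (nzA j); rewrite inE => Aij.
  by move/ffunP/(_ i); rewrite outcome_status1 outcome_status0 Aij.
rewrite -(status_support x) -(status_support x') in eAxx' *; congr status.
case: (card_le1_cases wx) eAxx' => [->|[j ->]]; case: (card_le1_cases wx') => [->|[j' ->]] //.
- by move/esym/outcome_neq0.
- by move/outcome_neq0.
move/ffunP=> eAjj'; congr [set _]; apply: injA; apply/setP => i.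
by have := eAjj' i; rewrite !outcome_status1 !inE.
Qed.

End Outcomes.

Lemma double_counting (T U : finType) (R : T -> U -> bool) :
  \sum_x #|[set y | R x y]| = \sum_y #|[set x | R x y]|.
Proof.
under eq_bigr do rewrite -sum1dep_card big_mkcond.
under [RHS]eq_bigr do rewrite -sum1dep_card big_mkcond.
exact: exchange_big.
Qed.

Lemma leq_card_inj_singletons (T U : finType) (F : T -> {set U}) :
  injective F -> #|[set x | #|F x| == 1]| <= #|U|.
Proof.
move=> injF; rewrite -(card_imset _ injF) -[#|U|]bin1 -card_draws.
apply/subset_leq_card/subsetP => S /imsetP[x]; rewrite inE => Fx1 ->.
by rewrite inE.
Qed.

Lemma good_card_bound r m n (A : 'M[bool]_(m, n)) : good r A -> 2 * n <= (r + 1) * m.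
Proof.
case=> /identifies_oneP[injA nzA] rowA.
pose single := [set j | #|col_support A j| == 1].
have two_le j : 2 <= #|col_support A j| + (j \in single).
  by move: (nzA j); rewrite -card_gt0 inE; case: eqP => /=; lia.
have sum_ge : 2 * n <= \sum_j #|col_support A j| + #|single|.
  have -> : 2 * n = \sum_(j < n) 2 by rewrite sum_nat_const card_ord mulnC.
  rewrite -sum1_card [\sum_(j in single) 1]big_mkcond -big_split.
  by apply: leq_sum => j _; apply: two_le.
have sum_le : \sum_j #|col_support A j| <= r * m.
  rewrite (double_counting (fun j i => A i j)).
  apply: (@leq_trans (\sum_(i < m) r)); first by apply: leq_sum => i _; apply: rowA.
  by rewrite sum_nat_const card_ord mulnC.
have single_le : #|single| <= m by rewrite -[m]card_ord; apply: leq_card_inj_singletons.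
lia.
Qed.

Lemma exists_good_incidence_mx r m (P : {set {set 'I_m}}) :
  set0 \notin P -> (forall i, #|[set S in P | i \in S]| <= r) ->
  exists A : 'M[bool]_(m, #|P|), good r A.
Proof.
move=> P0 rowP.
pose A : 'M[bool]_(m, #|P|) := (\matrix_(i, j) (i \in enum_val (A := mem P) j))%R.
have colA j : col_support A j = enum_val j by apply/setP => i; rewrite inE mxE.
exists A; split.
  apply/identifies_oneP; split=> [j j' | j]; rewrite !colA; first exact: enum_val_inj.
  by apply: contraNneq P0 => <-; apply: enum_valP.
move=> i; apply: leq_trans (rowP i).
rewrite -(card_imset _ (@enum_val_inj _ (mem P))).
apply/subset_leq_card/subsetP => S /imsetP[j]; rewrite !inE /A mxE => iS ->.
by rewrite enum_valP.
Qed.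

Definition small_sets r : {set {set 'I_r}} := [set S : {set 'I_r} | 0 < #|S| <= 2].

Lemma card_small_sets r : #|small_sets r| = r * (r + 1) %/ 2.
Proof.
have -> : small_sets r =
    [set S : {set 'I_r} | #|S| == 1] :|: [set S : {set 'I_r} | #|S| == 2].
  by apply/setP => S; rewrite !inE; case: #|S| => [|[|[|k]]].
rewrite cardsU (_ : _ :&: _ = set0) ?cards0 ?subn0; last first.
  by apply/setP => S; rewrite !inE; case: eqP => // ->.
by rewrite !card_draws card_ord addnC -binS bin2 divn2 addn1 mulnC.
Qed.

Lemma card_small_sets_containing r (i : 'I_r) : #|[set S in small_sets r | i \in S]| <= r.
Proof.
rewrite -[r in _ <= r]card_ord -cardsT.
apply: leq_trans (leq_imset_card (fun k => [set i; k]) _).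
apply/subset_leq_card/subsetP => S; rewrite !inE => /andP[/andP[_ S_le2] iS].
have : #|S :\ i| <= 1 by move: S_le2; rewrite (cardsD1 i S) iS.
case/card_le1_cases => [Si0 | [k Sik]]; apply/imsetP.
  by exists i; rewrite ?inE // -(setD1K iS) Si0 setU0 setUid.
by exists k; rewrite ?inE // -(setD1K iS) Sik.
Qed.

Theorem mainTheorem1 (r : nat) (hr : 1 <= r) :
  (exists A : 'M[bool]_(r, r * (r + 1) %/ 2), good r A) /\
  (forall (m n : nat) (A : 'M[bool]_(m, n)), good r A -> ~ ((r + 1) * m < 2 * n)).
Proof.
split.
  rewrite -card_small_sets; apply: exists_good_incidence_mx.
    by rewrite inE cards0.
  exact: card_small_sets_containing.
by move=> m n A /good_card_bound; rewrite leqNgt => /negP.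
Qed.
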